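(* Fix an association $\kappa$ in which every UE is served by at least one cell and every cell serves at least one UE, and fix a demand vector $\bm{d}\in\mathbb{R}^m_{>0}$. Let $\bm{p}\in\mathbb{R}^n_{>0}$, let $\alpha>1$, and set $\bm{p}'=\bm{p}/\alpha$. Let $\bm{x}$ be the fixed point $\bm{x}=\bm{f}(\bm{h}(\bm{x},\bm{p},\kappa),\bm{d},\kappa)$, and let $\bm{x}'$ be the fixed point $\bm{x}'=\bm{f}(\bm{h}(\bm{x}',\bm{p}',\kappa),\bm{d},\kappa)$. Then $\bm{p}'^{\mathsf T}\bm{x}'\le\bm{p}^{\mathsf T}\bm{x}$.
   Context: Cellular network model. $\mathcal{I}$ is a set of $n$ cells and $\mathcal{J}$ a set of $m$ UEs. For an association $\kappa\in\{0,1\}^{n\times m}$, let $\mathcal{I}_j=\{i:\kappa_{ij}=1\}$ and $\mathcal{J}_i=\{j:\kappa_{ij}=1\}$. $M,B>0$ are constants, $\sigma^2>0$ is the noise power and $g_{ij}>0$ are the channel gains. For $\bm{x}\in\mathbb{R}^n_{\ge0}$ and $\bm{p}\in\mathbb{R}^n_{>0}$: - $h_j(\bm{x},\bm{p},\kappa)=\dfrac{\sum_{i\in\mathcal{I}_j}p_ig_{ij}}{\sum_{k\in\mathcal{I}\setminus\mathcal{I}_j}p_kg_{kj}x_k+\sigma^2}$; - $f_i(\bm{\gamma},\bm{d},\kappa)=\sum_{j\in\mathcal{J}_i}\dfrac{d_j}{MB\log_2(1+\gamma_j)}$. It is known, and assumed here, that for fixed $\bm{p},\bm{d},\kappa$ the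 map $\bm{x}\mapsto\bm{f}(\bm{h}(\bm{x},\bm{p},\kappa),\bm{d},\kappa)$ has a unique fixed point in $\mathbb{R}^n_{\ge0}$. *)

From HB Require Import structures.
From mathcomp Require Import all_boot all_order all_algebra.
From mathcomp Require Import all_classical all_reals exp.
Set Implicit Arguments. Unset Strict Implicit. Unset Printing Implicit Defensive.
Import Order.TTheory GRing.Theory Num.Theory.
Local Open Scope ring_scope.

Definition log2 {R : realType} (y : R) : R := ln y / ln 2.

(* SINR-type map h_j(x,p,kappa); kappa i j = true iff cell i serves UE j *)
Definition hmap {R : realType} {n m : nat} (sigma2 : R) (g : 'I_n -> 'I_m -> R)
  (kappa : 'I_n -> 'I_m -> bool) (x p : 'I_n -> R) (j : 'I_m) : R :=
  (\sum_(i < n | kappa i j) p i * g i j) /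
  (\sum_(k < n | ~~ kappa k j) p k * g k j * x k + sigma2).

Definition fmap {R : realType} {n m : nat} (M B : R)
  (kappa : 'I_n -> 'I_m -> bool) (gamma d : 'I_m -> R) (i : 'I_n) : R :=
  \sum_(j < m | kappa i j) d j / (M * B * log2 (1 + gamma j)).

Definition is_fixed_point {R : realType} {n m : nat} (M B sigma2 : R)
  (g : 'I_n -> 'I_m -> R) (kappa : 'I_n -> 'I_m -> bool)
  (p : 'I_n -> R) (d : 'I_m -> R) (x : 'I_n -> R) : Prop :=
  (forall i, 0 <= x i) /\
  (forall i, x i = fmap M B kappa (hmap sigma2 g kappa x p) d i).

(* Write x' <= c alpha x for the least such c.  If c > 1, the cell i attaining
   the bound sees, on every served UE, an SINR larger than 1/(c alpha) times
   the old one: powers drop by alpha, interference by at most c alpha, and the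
   noise term not at all.  Concavity of log turns this into a rate larger than
   1/(c alpha) times the old rate, so the load of cell i is strictly below
   c alpha x_i = x'_i, contradicting the fixed point equation.  Hence
   x' <= alpha x, i.e. p'_i x'_i <= p_i x_i for every cell. *)
From Pilot Require Import Defs.
From HB Require Import structures.
From mathcomp Require Import all_boot all_order all_algebra.
From mathcomp Require Import all_classical all_reals exp.
From mathcomp Require Import interval_inference convex ring lra.
Set Implicit Arguments. Unset Strict Implicit. Unset Printing Implicit Defensive.
Import Order.TTheory GRing.Theory Num.Theory.
Local Open Scope ring_scope.

Lemma psumr_gt0 (R : numDomainType) (k : nat) (P : pred 'I_k) (F : 'I_k -> R)
    (i0 : 'I_k) :
  (forall i, P i -> 0 <= F i) -> P i0 -> 0 < F i0 ->
  0 < \sum_(i < k | P i) F i.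
Proof.
move=> F_ge0 Pi0 Fi0_gt0; rewrite (bigD1 i0) //=.
apply: (lt_le_trans Fi0_gt0); rewrite lerDl sumr_ge0 // => i /andP[Pi _].
exact: F_ge0.
Qed.

Lemma ln1D_concave (R : realType) (t y : R) : 0 <= t -> t <= 1 -> 0 <= y ->
  t * ln (1 + y) <= ln (1 + t * y).
Proof.
move=> t_ge0 t_le1 y_ge0.
have := @concave_ln R (Itv01 t_ge0 t_le1) (1 + y) 1 ltac:(lra) ltac:(lra).
rewrite !convRE /= ln1 mulr0 addr0 => /le_trans; apply.
by have -> : t * (1 + y) + (1 - t) * 1 = 1 + t * y by ring.
Qed.

Lemma rate_cost_lt (R : realType) (M B d t gam gam' : R) :
  0 < M -> 0 < B -> 0 < d -> 0 < t -> t < 1 -> 0 < gam -> t * gam < gam' ->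
  d / (M * B * log2 (1 + gam')) < t^-1 * (d / (M * B * log2 (1 + gam))).
Proof.
move=> M_gt0 B_gt0 d_gt0 t_gt0 t_lt1 gam_gt0 lt_gam'.
have ln2_gt0 : 0 < ln (2 : R) by apply: ln_gt0; lra.
have ln_gam_gt0 : 0 < ln (1 + gam) by apply: ln_gt0; lra.
have ln_lt : t * ln (1 + gam) < ln (1 + gam').
  apply: (le_lt_trans (ln1D_concave (ltW t_gt0) (ltW t_lt1) (ltW gam_gt0))).
  by rewrite ltr_ln ?posrE; nra.
have ln_gam'_gt0 : 0 < ln (1 + gam') by apply: lt_trans ln_lt; apply: mulr_gt0.
rewrite /log2.
have -> : t^-1 * (d / (M * B * (ln (1 + gam) / ln 2))) =
          d / (M * B * ((t * ln (1 + gam)) / ln 2)).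
  by field; rewrite !gt_eqF.
rewrite ltr_pM2l // ltf_pV2 ?posrE ?mulr_gt0 ?invr_gt0 //.
by rewrite ltr_pM2l ?mulr_gt0 // ltr_pM2r ?invr_gt0.
Qed.

Section LoadCoupling.

Variables (R : realType) (n m : nat) (M B sigma2 : R).
Variables (g : 'I_n -> 'I_m -> R) (kappa : 'I_n -> 'I_m -> bool).
Variable d : 'I_m -> R.

Hypotheses (M_gt0 : 0 < M) (B_gt0 : 0 < B) (sigma2_gt0 : 0 < sigma2).
Hypothesis g_gt0 : forall i j, 0 < g i j.
Hypothesis UE_served : forall j, exists i, kappa i j.
Hypothesis cell_serves : forall i, exists j, kappa i j.
Hypothesis d_gt0 : forall j, 0 < d j.

Let h := hmap sigma2 g kappa.
Let f := Defs.fmap M B kappa.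

Lemma interference_ge0 (p x : 'I_n -> R) j :
  (forall i, 0 < p i) -> (forall i, 0 <= x i) ->
  0 <= \sum_(k < n | ~~ kappa k j) p k * g k j * x k.
Proof.
by move=> p_gt0 x_ge0; apply: sumr_ge0 => k _; rewrite !mulr_ge0 // ltW.
Qed.

Lemma signal_gt0 (p : 'I_n -> R) j :
  (forall i, 0 < p i) -> 0 < \sum_(i < n | kappa i j) p i * g i j.
Proof.
move=> p_gt0; have [i kij] := UE_served j.
by apply: (psumr_gt0 _ kij); rewrite ?mulr_gt0 // => k _; rewrite ltW ?mulr_gt0.
Qed.

Lemma hmap_gt0 (p x : 'I_n -> R) j :
  (forall i, 0 < p i) -> (forall i, 0 <= x i) -> 0 < h x p j.
Proof.
move=> p_gt0 x_ge0; rewrite /h /hmap divr_gt0 ?signal_gt0 //.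
by apply: ltr_wpDl sigma2_gt0; apply: interference_ge0.
Qed.

Lemma fmap_gt0 (gam : 'I_m -> R) i : (forall j, 0 < gam j) -> 0 < f gam d i.
Proof.
move=> gam_gt0; have [j kij] := cell_serves i.
have term_gt0 k : 0 < d k / (M * B * log2 (1 + gam k)).
  have log_gt0 : 0 < log2 (1 + gam k).
    by rewrite /log2 divr_gt0 //; apply: ln_gt0; have := gam_gt0 k; lra.
  by apply: divr_gt0 => //; do 2 apply: mulr_gt0 => //.
exact: (psumr_gt0 (fun k _ => ltW (term_gt0 k)) kij (term_gt0 j)).
Qed.

Lemma fixed_point_gt0 (p x : 'I_n -> R) :
  (forall i, 0 < p i) -> is_fixed_point M B sigma2 g kappa p d x ->
  forall i, 0 < x i.
Proof.
by move=> p_gt0 [x_ge0 x_fix] i; rewrite x_fix fmap_gt0 // => j; apply: hmap_gt0.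
Qed.

(* Strictness comes from the noise term, which is not scaled. *)
Lemma hmap_scaled_gt (p x y : 'I_n -> R) (a c : R) j :
  (forall i, 0 < p i) -> 0 < a -> 1 < c ->
  (forall i, 0 <= x i) -> (forall i, 0 <= y i) ->
  (forall i, y i <= c * a * x i) ->
  (c * a)^-1 * h x p j < h y (fun i => p i / a) j.
Proof.
move=> p_gt0 a_gt0 c_gt1 x_ge0 y_ge0 y_le.
have pa_gt0 i : 0 < p i / a by rewrite divr_gt0.
rewrite /h /hmap.
set N := \sum_(i < n | kappa i j) p i * g i j.
set D := \sum_(k < n | ~~ kappa k j) p k * g k j * x k.
set D' := \sum_(k < n | ~~ kappa k j) p k / a * g k j * y k.
have -> : \sum_(i < n | kappa i j) p i / a * g i j = N / a.
  by rewrite /N mulr_suml; apply: eq_bigr => i _; rewrite mulrAC.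
have N_gt0 : 0 < N / a by rewrite divr_gt0 ?signal_gt0.
have D_ge0 : 0 <= D by apply: interference_ge0.
have D'_ge0 : 0 <= D' by apply: interference_ge0.
have D'_le : D' <= c * D.
  rewrite /D mulr_sumr; apply: ler_sum => k _.
  have -> : c * (p k * g k j * x k) = p k / a * g k j * (c * a * x k).
    by field; rewrite gt_eqF.
  by rewrite ler_wpM2l // ltW // mulr_gt0.
have c_gt0 : 0 < c by lra.
have DS_gt0 : 0 < D + sigma2 by rewrite ltr_wpDl.
have -> : (c * a)^-1 * (N / (D + sigma2)) = N / a / (c * (D + sigma2)).
  by field; rewrite !gt_eqF.
rewrite ltr_pM2l // ltf_pV2 ?posrE ?mulr_gt0 ?ltr_wpDl //.
by rewrite mulrDr; apply: ler_ltD; rewrite // ltr_pMl.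
Qed.

Lemma fmap_lt_scaled (gam gam' : 'I_m -> R) (t : R) i :
  0 < t -> t < 1 -> (forall j, 0 < gam j) -> (forall j, t * gam j < gam' j) ->
  f gam' d i < t^-1 * f gam d i.
Proof.
move=> t_gt0 t_lt1 gam_gt0 gam'_gt; rewrite /f /Defs.fmap mulr_sumr.
apply: ltr_sum => [|j _]; last exact: rate_cost_lt.
have [j kij] := cell_serves i.
by apply/hasP; exists j; rewrite ?mem_index_enum.
Qed.

Section ScaledPowers.

Variables (p : 'I_n -> R) (alpha : R) (x x' : 'I_n -> R).
Hypotheses (p_gt0 : forall i, 0 < p i) (alpha_gt1 : 1 < alpha).
Hypothesis x_fix : is_fixed_point M B sigma2 g kappa p d x.
Hypothesis x'_fix :
  is_fixed_point M B sigma2 g kappa (fun i => p i / alpha) d x'.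

Lemma scaled_fixed_point_ltr (c : R) :
  1 < c -> (forall i, x' i <= c * alpha * x i) ->
  forall i, x' i < c * alpha * x i.
Proof.
move=> c_gt1 x'_le i.
have [x_ge0 x_eq] := x_fix; have [x'_ge0 x'_eq] := x'_fix.
have ca_gt1 : 1 < c * alpha := mulr_egt1 c_gt1 alpha_gt1.
have ca_gt0 : 0 < c * alpha := lt_trans ltr01 ca_gt1.
have t_gt0 : 0 < (c * alpha)^-1 by rewrite invr_gt0.
have t_lt1 : (c * alpha)^-1 < 1 by rewrite invf_lt1.
rewrite x'_eq x_eq -[c * alpha]invrK.
apply: fmap_lt_scaled => // [j|j]; first by apply: hmap_gt0.
by apply: hmap_scaled_gt => //; apply: lt_trans ltr01 alpha_gt1.
Qed.

Lemma scaled_fixed_point_le : forall k, x' k <= alpha * x k.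
Proof.
move=> k.
have alpha_gt0 : 0 < alpha := lt_trans ltr01 alpha_gt1.
have ax_gt0 i : 0 < alpha * x i by rewrite mulr_gt0 ?(fixed_point_gt0 p_gt0 x_fix).
pose ratio i := x' i / (alpha * x i).
have [i0 _ ratio_max] := @arg_maxP _ R _ k xpredT ratio isT.
set c := ratio i0.
have x'_le i : x' i <= c * alpha * x i.
  by rewrite -mulrA -ler_pdivrMr //; apply: ratio_max.
have [c_le1 | c_gt1] := leP c 1.
  by apply: (le_trans (x'_le k)); rewrite -mulrA ler_piMl // ltW.
have := scaled_fixed_point_ltr c_gt1 x'_le i0.
by rewrite -mulrA /c /ratio divfK ?ltxx // gt_eqF.
Qed.

End ScaledPowers.

End LoadCoupling.

Theorem theorem1 (R : realType) (n m : nat) (M B sigma2 : R)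
  (g : 'I_n -> 'I_m -> R) (kappa : 'I_n -> 'I_m -> bool)
  (d : 'I_m -> R) (p : 'I_n -> R) (alpha : R) (x x' : 'I_n -> R) :
  0 < M -> 0 < B -> 0 < sigma2 ->
  (forall i j, 0 < g i j) ->
  (forall j, exists i, kappa i j) ->
  (forall i, exists j, kappa i j) ->
  (forall j, 0 < d j) ->
  (forall i, 0 < p i) ->
  1 < alpha ->
  (* standing assumption: the fixed point exists and is unique, for every
     positive power vector *)
  (forall q : 'I_n -> R, (forall i, 0 < q i) ->
     forall y z, is_fixed_point M B sigma2 g kappa q d y ->
                 is_fixed_point M B sigma2 g kappa q d z -> y = z) ->
  is_fixed_point M B sigma2 g kappa p d x ->
  is_fixed_point M B sigma2 g kappa (fun i => p i / alpha) d x' ->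
  \sum_(i < n) (p i / alpha) * x' i <= \sum_(i < n) p i * x i.
Proof.
move=> M_gt0 B_gt0 sigma2_gt0 g_gt0 UE_served cell_serves d_gt0 p_gt0
  alpha_gt1 _ x_fix x'_fix.
have x'_le := scaled_fixed_point_le M_gt0 B_gt0 sigma2_gt0 g_gt0 UE_served
  cell_serves d_gt0 p_gt0 alpha_gt1 x_fix x'_fix.
apply: ler_sum => i _.
rewrite mulrAC -mulrA ler_pM2l // ler_pdivrMr; last lra.
by rewrite mulrC x'_le.
Qed.
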